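(* Let $S$ be a scheme on $X$, $\mathbb F$ a field, $x\in X$, $E_a^*=E_a^*(x)$. Let $a\ge 0$ be an integer and $R_{i_b},R_{j_b},R_{\ell_b}\in S$ for $b=0,\dots,a$. Suppose $p_{i_bj_b}^{\ell_b}=1$ and $k_{i_b}=k_{\ell_b}=2$ for all $b\in\{0,\dots,a\}$, and $\ell_c=i_{c+1}$ for all $c\in\{0,\dots,a-1\}$. Write $xR_{i_0}=\{u_1,u_2\}$ and $xR_{\ell_a}=\{v_1,v_2\}$. Then the product $E_{i_0}^*A_{j_0}E_{\ell_0}^*E_{i_1}^*A_{j_1}E_{\ell_1}^*\cdots E_{i_a}^*A_{j_a}E_{\ell_a}^*$ equals either $E_{u_1v_1}+E_{u_2v_2}$ or $E_{u_1v_2}+E_{u_2v_1}$.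
   Context: Let $X$ be a nonempty finite set. A scheme of class $d$ on $X$ is a partition $S=\{R_0,\dots,R_d\}$ of $X\times X$ into nonempty sets such that $R_0=\{(b,b):b\in X\}$; for each $c$ there is $c'$ with $R_{c'}=\{(f,e):(e,f)\in R_c\}$; and for all $i,j,k$ the intersection number $p_{ij}^k=|\{\ell\in X:(m,\ell)\in R_i,(\ell,n)\in R_j\}|$ does not depend on $(m,n)\in R_k$. The valency is $k_a=p_{aa'}^0$. For $y\in X$, $yR_a=\{z:(y,z)\in R_a\}$. $A_a\in M_X(\mathbb F)$ is the $(0,1)$ adjacency matrix of $R_a$, $E_a^*(y)$ is the diagonal $(0,1)$-matrix with ones exactly at positions indexed by $yR_a$, and $E_{uv}$ is the matrix unit with a single $1$ at position $(u,v)$. *)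

From HB Require Import structures.
From mathcomp Require Import all_boot all_order all_algebra.
Set Implicit Arguments. Unset Strict Implicit. Unset Printing Implicit Defensive.
Import GRing.Theory.
Local Open Scope ring_scope.

(* A scheme of class d on a finite set X is encoded by the function
   r : X -> X -> 'I_d.+1 sending (m,n) to the index c with (m,n) \in R_c;
   R_c = [set (m,n) | r m n == c]. *)

Section Scheme.
Variables (X : finType) (d : nat) (r : X -> X -> 'I_d.+1).

Definition pnum (i j : 'I_d.+1) (m n : X) : nat :=
  #|[set l | (r m l == i) && (r l n == j)]|.

Definition is_scheme : Prop :=
  [/\ (forall c : 'I_d.+1, exists m n, r m n = c),
      (forall m n, (r m n == ord0) = (m == n)),
      (forall c : 'I_d.+1, exists c' : 'I_d.+1,
          forall e f, (r f e == c') = (r e f == c))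
    & (forall (i j k : 'I_d.+1) (m n m' n' : X),
          r m n = k -> r m' n' = k -> pnum i j m n = pnum i j m' n')].

(* intersection number p_{ij}^k, evaluated at some pair in R_k *)
Definition inum (i j k : 'I_d.+1) : nat :=
  match [pick mn : X * X | r mn.1 mn.2 == k] with
  | Some mn => pnum i j mn.1 mn.2
  | None => 0
  end.

Definition tr_idx (c : 'I_d.+1) : 'I_d.+1 :=
  odflt c [pick c' : 'I_d.+1 | [forall e, forall f, (r f e == c') == (r e f == c)]].

Definition valency (c : 'I_d.+1) : nat := inum c (tr_idx c) ord0.

Variable F : fieldType.

(* matrices indexed by X via enum_rank *)
Definition adjmx (c : 'I_d.+1) : 'M[F]_#|X| :=
  \matrix_(p, q) (r (enum_val p) (enum_val q) == c)%:R.

Definition dualidem (y : X) (c : 'I_d.+1) : 'M[F]_#|X| :=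
  \matrix_(p, q) ((p == q) && (r y (enum_val p) == c))%:R.


Definition chain (y : X) (a : nat) (i j l : nat -> 'I_d.+1) : 'M[F]_#|X| :=
  foldr (fun b M => dualidem y (i b) *m adjmx (j b) *m dualidem y (l b) *m M)
        1%:M (iota 0 a.+1).
End Scheme.

Definition Emx (F : fieldType) (X : finType) (u v : X) : 'M[F]_#|X| :=
  delta_mx (enum_rank u) (enum_rank v).

From mathcomp Require Import all_boot all_order all_algebra.
Set Implicit Arguments. Unset Strict Implicit. Unset Printing Implicit Defensive.
Import GRing.Theory.
Local Open Scope ring_scope.

(* Each block E*_i A_j E*_l is the 0/1 matrix of the graph of a map xR_i -> xR_l:
   for q in xR_l there is exactly one p in xR_i with (p,q) in R_j because
   p_ij^l = 1, and double counting the pairs with |xR_i| = |xR_l| = 2 shows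
   that each p in xR_i also has exactly one such q.  Consecutive blocks compose,
   so the whole product is the graph of an injection of {u1,u2} into {v1,v2}. *)

Lemma card_set_in_sum (X : finType) (C : {set X}) (P : pred X) :
  #|[set z in C | P z]| = (\sum_(z in C) P z)%N.
Proof.
rewrite -sum1_card big_mkcond [RHS]big_mkcond; apply: eq_bigr => z _.
by rewrite !inE; case: (z \in C); case: (P z).
Qed.

Lemma double_count (X : finType) (A B : {set X}) (R : rel X) :
  (\sum_(p in A) #|[set q in B | R p q]| = \sum_(q in B) #|[set p in A | R p q]|)%N.
Proof.
under eq_bigr do rewrite card_set_in_sum.
by rewrite exchange_big; apply: eq_bigr => q _; rewrite card_set_in_sum.
Qed.

Lemma foldr_iotaS (R : Type) (f : nat -> R -> R) z n :
  foldr f z (iota 0 n.+1) = f 0%N (foldr (fun b => f b.+1) z (iota 0 n)).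
Proof. by rewrite /= (iotaDl 1 0) foldr_map. Qed.

Section GraphMatrix.
Variables (F : fieldType) (X : finType).

Definition graphmx (A : {set X}) (f : X -> X) : 'M[F]_#|X| :=
  \matrix_(p, q) ((enum_val p \in A) && (f (enum_val p) == enum_val q))%:R.

Lemma graphmx_mul (A B : {set X}) (f g : X -> X) :
  {in A, forall p, f p \in B} ->
  graphmx A f *m graphmx B g = graphmx A (g \o f).
Proof.
move=> fAB; apply/matrixP => p q; rewrite !mxE.
have [pA | pNA] := boolP (enum_val p \in A); last first.
  by rewrite big1 // => k _; rewrite !mxE (negbTE pNA) mul0r.
rewrite (bigD1 (enum_rank (f (enum_val p)))) //= !mxE enum_rankK pA fAB //.
rewrite eqxx mul1r big1 ?addr0 // => k k_neq; rewrite !mxE pA /=.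
case: eqP => [fpk | _]; last by rewrite mul0r.
by move: k_neq; rewrite fpk enum_valK eqxx.
Qed.

Lemma graphmx_sum (A : {set X}) (f : X -> X) :
  graphmx A f = \sum_(p in A) Emx F p (f p).
Proof.
have rank_eq (k : 'I_#|X|) u : (k == enum_rank u) = (enum_val k == u).
  by rewrite -[k]enum_valK (can_eq enum_rankK) enum_valK.
apply/matrixP => p q; rewrite summxE !mxE.
under eq_bigr do rewrite mxE !rank_eq.
have [pA | pNA] := boolP (enum_val p \in A); last first.
  by rewrite big1 // => u uA; case: eqP => // pu; rewrite pu uA in pNA.
rewrite (bigD1 (enum_val p)) //= eqxx eq_sym big1 ?addr0 // => u /andP [_ u_neq].
by rewrite eq_sym (negbTE u_neq).
Qed.

End GraphMatrix.

Section Scheme.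
Variables (X : finType) (d : nat) (r : X -> X -> 'I_d.+1).
Hypothesis Hs : is_scheme r.

Definition rnbhd (y : X) (c : 'I_d.+1) : {set X} := [set z | r y z == c].

Lemma in_rnbhd y c z : (z \in rnbhd y c) = (r y z == c).
Proof. by rewrite inE. Qed.

Lemma scheme_transpose (c : 'I_d.+1) :
  exists c' : 'I_d.+1, forall e f, (r f e == c') = (r e f == c).
Proof. by case: Hs. Qed.

Lemma inumE (i j k : 'I_d.+1) m n : r m n = k -> inum r i j k = pnum r i j m n.
Proof.
case: Hs => _ _ _ regular rmn; rewrite /inum.
case: pickP => [mn /eqP rk | /(_ (m, n))]; first exact: regular rk rmn.
by rewrite /= rmn eqxx.
Qed.

Lemma valencyE (c : 'I_d.+1) y : valency r c = #|rnbhd y c|.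
Proof.
have ryy : r y y = ord0 by case: Hs => _ diag _ _; apply/eqP; rewrite diag.
rewrite /valency (inumE _ _ ryy) /pnum /tr_idx.
case: pickP => [c' /forallP c'_tr | no_tr]; last first.
  have [c' c'_tr] := scheme_transpose c.
  case/negP: (negbT (no_tr c')); apply/forallP => e; apply/forallP => f.
  by rewrite c'_tr.
apply: eq_card => z; rewrite !inE.
by move: (c'_tr y) => /forallP /(_ z) /eqP ->; rewrite andbb.
Qed.

Section Block.
Variables (y : X) (i j l : 'I_d.+1).
Hypotheses (Hp : inum r i j l = 1%N) (Hi : valency r i = 2%N) (Hl : valency r l = 2%N).

Lemma block_backward q :
  q \in rnbhd y l -> #|[set p in rnbhd y i | r p q == j]| = 1%N.
Proof.
rewrite in_rnbhd => /eqP ryq; rewrite -Hp (inumE _ _ ryq).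
by apply: eq_card => p; rewrite !inE.
Qed.

Lemma block_forward p :
  p \in rnbhd y i -> #|[set q in rnbhd y l | r p q == j]| = 1%N.
Proof.
move=> pi; have [j' j'_tr] := scheme_transpose j.
have cst p' : p' \in rnbhd y i ->
    #|[set q in rnbhd y l | r p' q == j]| = inum r l j' i.
  rewrite in_rnbhd => /eqP ryp; rewrite (inumE _ _ ryp).
  by apply: eq_card => q; rewrite !inE j'_tr.
have := double_count (rnbhd y i) (rnbhd y l) (fun p q => r p q == j).
rewrite (eq_bigr _ cst) (eq_bigr _ block_backward) !sum_nat_const.
rewrite -!valencyE Hi Hl muln1 => two_c.
by rewrite cst //; apply/eqP; rewrite -(eqn_pmul2l (isT : 0 < 2)%N) two_c.
Qed.

Definition block_map p := odflt p [pick q in rnbhd y l | r p q == j].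

Lemma block_mapP p : p \in rnbhd y i ->
  forall q, (q \in rnbhd y l) && (r p q == j) = (block_map p == q).
Proof.
move=> /block_forward /eqP /cards1P [q0 q0_uniq] q.
have q0E z : (z \in rnbhd y l) && (r p z == j) = (z == q0).
  by move/setP: q0_uniq => /(_ z); rewrite !inE.
rewrite /block_map q0E eq_sym; case: pickP => [q1 | /(_ q0)].
  by rewrite q0E => /eqP ->.
by rewrite q0E eqxx.
Qed.

Lemma block_map_into : {in rnbhd y i, forall p, block_map p \in rnbhd y l}.
Proof. by move=> p /block_mapP /(_ (block_map p)); rewrite eqxx => /andP []. Qed.

Lemma block_map_inj : {in rnbhd y i &, injective block_map}.
Proof.
move=> p1 p2 p1i p2i f12.
have := block_mapP p1i (block_map p1); rewrite eqxx => /andP [_ /eqP r1].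
have := block_mapP p2i (block_map p1); rewrite f12 eqxx -f12 => /andP [_ /eqP r2].
have le1 : (#|[set p in rnbhd y i | r p (block_map p1) == j]| <= 1)%N.
  by rewrite block_backward // block_map_into.
by apply: (card_le1_eqP le1 p2 p1); rewrite inE ?p1i ?p2i ?r1 ?r2 eqxx.
Qed.

Lemma dualidem_diag (F : fieldType) (c : 'I_d.+1) :
  dualidem r F y c = diag_mx (\row_p (r y (enum_val p) == c)%:R).
Proof.
apply/matrixP => p q; rewrite !mxE.
by case: (p == q); rewrite ?mulr0n.
Qed.

Lemma blockE (F : fieldType) :
  dualidem r F y i *m adjmx r F j *m dualidem r F y l
  = graphmx F (rnbhd y i) block_map.
Proof.
rewrite !dualidem_diag mul_diag_mx mul_mx_diag; apply/matrixP => p q.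
rewrite !mxE -!natrM !mulnb; congr (_%:R).
have [pi | pNi] := boolP (enum_val p \in rnbhd y i); last first.
  by move: pNi; rewrite in_rnbhd => /negbTE ->.
by move: (pi); rewrite -(block_mapP pi) !in_rnbhd => -> /=; rewrite andbC.
Qed.

End Block.

Lemma chainS (F : fieldType) y a (i j l : nat -> 'I_d.+1) :
  chain r F y a.+1 i j l
  = dualidem r F y (i 0%N) *m adjmx r F (j 0%N) *m dualidem r F y (l 0%N)
    *m chain r F y a (fun b => i b.+1) (fun b => j b.+1) (fun b => l b.+1).
Proof. by rewrite /chain foldr_iotaS. Qed.

Lemma chain_graphmx (F : fieldType) x a (i j l : nat -> 'I_d.+1) :
  (forall b, (b <= a)%N -> inum r (i b) (j b) (l b) = 1%N) ->
  (forall b, (b <= a)%N -> valency r (i b) = 2%N /\ valency r (l b) = 2%N) ->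
  (forall c, (c < a)%N -> l c = i c.+1) ->
  exists g, [/\ {in rnbhd x (i 0%N), forall p, g p \in rnbhd x (l a)},
                {in rnbhd x (i 0%N) &, injective g}
              & chain r F x a i j l = graphmx F (rnbhd x (i 0%N)) g].
Proof.
elim: a i j l => [|a IH] i j l Hp Hk Hc.
  have [Hi Hl] := Hk 0%N isT; have Hp0 := Hp 0%N isT.
  exists (block_map x (j 0%N) (l 0%N)); split.
  - exact: (block_map_into (y := x) Hp0 Hi Hl).
  - exact: (block_map_inj (y := x) Hp0 Hi Hl).
  - by rewrite /chain /= mulmx1 (blockE x Hp0 Hi Hl).
have [g [g_into g_inj chainE]] := IH (fun b => i b.+1) (fun b => j b.+1)
  (fun b => l b.+1) (fun b => Hp b.+1) (fun b => Hk b.+1) (fun c => Hc c.+1).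
have [Hi Hl] := Hk 0%N isT; have Hp0 := Hp 0%N isT.
have l0 := Hc 0%N isT; rewrite l0 in Hp0 Hl.
have f_into := block_map_into (y := x) Hp0 Hi Hl.
exists (g \o block_map x (j 0%N) (i 1%N)); split.
- by move=> p /f_into /g_into.
- exact: in_inj_comp g_inj (block_map_inj (y := x) Hp0 Hi Hl) f_into.
- by rewrite chainS chainE l0 (blockE x Hp0 Hi Hl) graphmx_mul.
Qed.

End Scheme.

Theorem corollary3p9 (F : fieldType) (X : finType) (d : nat)
  (r : X -> X -> 'I_d.+1) (Hs : is_scheme r) (x : X) (a : nat)
  (i j l : nat -> 'I_d.+1)
  (Hp : forall b, (b <= a)%N -> inum r (i b) (j b) (l b) = 1%N)
  (Hk : forall b, (b <= a)%N -> valency r (i b) = 2%N /\ valency r (l b) = 2%N)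
  (Hc : forall c, (c < a)%N -> l c = i c.+1)
  (u1 u2 v1 v2 : X)
  (Hu : [set y | r x y == i 0%N] = [set u1; u2]) (Hu12 : u1 != u2)
  (Hv : [set y | r x y == l a] = [set v1; v2]) (Hv12 : v1 != v2) :
  chain r F x a i j l = Emx F u1 v1 + Emx F u2 v2 \/
  chain r F x a i j l = Emx F u1 v2 + Emx F u2 v1.
Proof.
have [g [g_into g_inj ->]] := chain_graphmx Hs F x Hp Hk Hc.
rewrite [rnbhd _ _ _]Hu in g_into g_inj *.
rewrite graphmx_sum big_setU1 ?big_set1 /=; last by rewrite inE.
have gv p : p \in [set u1; u2] -> (g p == v1) || (g p == v2).
  by move=> /g_into; rewrite [rnbhd _ _ _]Hv !inE.
have g12 : g u1 != g u2.
  by apply: contra_neq Hu12 => /g_inj; apply; rewrite !inE eqxx ?orbT.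
move: g12; case/orP: (gv u1 (set21 _ _)) => /eqP ->.
  by case/orP: (gv u2 (set22 _ _)) => /eqP ->; rewrite ?eqxx //; left.
by case/orP: (gv u2 (set22 _ _)) => /eqP ->; rewrite ?eqxx //; right.
Qed.
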